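(* Let $m$ be a positive integer and let $\Delta$ be a $(d-1)$-dimensional balanced simplicial complex (coloring $\kappa:V(\Delta)\to[d]$) that is $m$-Buchsbaum* over $\mathbf{k}$. Then for every nonempty proper subset $S\subsetneq[d]$, the rank-selected subcomplex $\Delta_S$ is $m$-Buchsbaum* over $\mathbf{k}$.
   Context: All complexes are finite; homology is reduced with coefficients in a fixed field $\mathbf{k}$. $\mathrm{lk}_\Delta(F)=\{\sigma\in\Delta:\sigma\cap F=\emptyset,\sigma\cup F\in\Delta\}$; for $A\subseteq V(\Delta)$, $\Delta-A$ is the induced subcomplex on $V(\Delta)\setminus A$. A $(d-1)$-dimensional complex is Buchsbaum over $\mathbf{k}$ if it is pure and for every nonempty face $F$, $\widetilde H_j(\mathrm{lk}_\Delta F)=0$ for $j<d-1-|F|$. A $(d-1)$-dimensional Buchsbaum complex $\Delta$ is Buchsbaum* over $\mathbf{k}$ if for every $p\in|\Delta|$ the canonical map $\widetilde H_{d-1}(|\Delta|)\to\widetilde H_{d-1}(|\Delta|,|\Delta|-p)$ is surjective. $\Delta$ is $m$-Buchsbaum* if $\Delta$ is Buchsbaum and $\Delta-A$ is Buchsbaum* of dimension $d-1$ for every $A\subseteq V(\Delta)$ with $|A|<m$. $\Delta$ is balanced if there is $\kappa:V(\Delta)\to[d]$ with $\kappa(u)\ne\kappa(v)$ for every edge $\{u,v\}$; $\Delta_S=\{\tau\in\Delta:\kappa(\tau)\subseteq S\}$. *)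

From HB Require Import structures.
From mathcomp Require Import all_boot all_order all_algebra.
Set Implicit Arguments. Unset Strict Implicit. Unset Printing Implicit Defensive.
Import GRing.Theory.
Local Open Scope ring_scope.

Section Complexes.
Variable V : finType.

Definition is_complex (D : {set {set V}}) : Prop :=
  set0 \in D /\ forall F G : {set V}, F \in D -> G \subset F -> G \in D.

Definition verts (D : {set {set V}}) : {set V} := [set v | [set v] \in D].

Definition pure_dim (D : {set {set V}}) (d : nat) : Prop :=
  (forall F, F \in D -> (#|F| <= d)%N) /\
  (forall F, F \in D -> exists2 G, G \in D & (F \subset G) && (#|G| == d)).

Definition link (D : {set {set V}}) (F : {set V}) : {set {set V}} :=
  [set s in D | [disjoint s & F] && (s :|: F \in D)].

Definition delete (D : {set {set V}}) (A : {set V}) : {set {set V}} :=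
  [set s in D | [disjoint s & A]].

Definition costar (D : {set {set V}}) (F : {set V}) : {set {set V}} :=
  [set s in D | ~~ (F \subset s)].

Definition rank_select (d : nat) (kappa : V -> 'I_d) (D : {set {set V}})
  (S : {set 'I_d}) : {set {set V}} :=
  [set t in D | (kappa @: t) \subset S].

Definition balanced (d : nat) (kappa : V -> 'I_d) (D : {set {set V}}) : Prop :=
  forall u v : V, [set u; v] \in D -> u != v -> kappa u != kappa v.

Variable K : fieldType.

(* Oriented simplicial chains with coefficients in K: functions on faces.
   A face G of size n (= dimension n-1) is oriented by the order enum V.
   The augmented chain complex is used (the empty face spans degree -1),
   so homology is reduced. *)
Definition supported (D : {set {set V}}) (n : nat) (c : {set V} -> K) : Prop :=
  forall G, c G != 0 -> (G \in D) && (#|G| == n).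

Definition bsign (v : V) (G : {set V}) : K :=
  (-1) ^+ #|[set u in G | (enum_rank u < enum_rank v)%N]|.

Definition bd (c : {set V} -> K) (G : {set V}) : K :=
  \sum_(v | v \notin G) bsign v G * c (v |: G).

(* reduced homology of D in degree n-1 vanishes: every (n-1)-cycle
   is a boundary *)
Definition Hred_vanish (D : {set {set V}}) (n : nat) : Prop :=
  forall c, supported D n c -> (forall G, bd c G = 0) ->
  exists2 b, supported D n.+1 b & forall G, bd b G = c G.

(* the map H_{d-1}(D) -> H_{d-1}(D, G) (G a subcomplex) is surjective:
   every relative (d-1)-cycle z is homologous mod G to an absolute cycle. *)
Definition Htop_rel_surj (D Gam : {set {set V}}) (d : nat) : Prop :=
  forall z, supported D d z -> (forall G, G \notin Gam -> bd z G = 0) ->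
  exists c, [/\ supported D d c, (forall G, bd c G = 0) &
    exists2 b, supported D d.+1 b &
      forall G, G \notin Gam -> z G = c G + bd b G].

Definition Buchsbaum (D : {set {set V}}) (d : nat) : Prop :=
  pure_dim D d /\
  forall F, F \in D -> F != set0 ->
    forall n : nat, (n + #|F| < d)%N -> Hred_vanish (link D F) n.

(* Buchsbaum* over K, of dimension d-1.  A point p of |D| lies in the
   relative interior of a unique nonempty face F, and |D| - p deformation
   retracts onto |costar D F| compatibly with inclusions, so
   H_{d-1}(|D|,|D|-p) = H_{d-1}(D, costar D F). *)
Definition BuchsbaumStar (D : {set {set V}}) (d : nat) : Prop :=
  Buchsbaum D d /\
  forall F, F \in D -> F != set0 -> Htop_rel_surj D (costar D F) d.

Definition mBuchsbaumStar (m : nat) (D : {set {set V}}) (d : nat) : Prop :=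
  Buchsbaum D d /\
  forall A : {set V}, A \subset verts D -> (#|A| < m)%N ->
    BuchsbaumStar (delete D A) d.

End Complexes.

From HB Require Import structures.
From mathcomp Require Import all_boot all_order all_algebra.
From mathcomp Require Import ring.
From Stdlib Require Import ClassicalEpsilon.
Set Implicit Arguments. Unset Strict Implicit. Unset Printing Implicit Defensive.
Import GRing.Theory.
Local Open Scope ring_scope.

(* Rank selection is reached by deleting one colour class i at a time, and in a
   balanced complex every face contains at most one vertex of colour i.
   Vanishing homology survives such a deletion as soon as it holds for the
   links of the deleted vertices: a cycle c avoiding colour i bounds some b,
   and near each vertex v of colour i the chain b has vanishing boundary, so
   it is there the boundary of a chain W_v living on the star of v; then
   b - sum_v bd W_v bounds c and avoids colour i.  Links of faces of D_S are
   colour deletions of links in D, which gives the Buchsbaum property.  For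
   Buchsbaum*, a relative top cycle z of D_S is filled near the face F, the
   filling W is completed near each v |: F to an absolute top cycle C_v of D by
   the Buchsbaum* property of D, and the links at v of the C_v add up to an
   absolute cycle of D_S agreeing with z on the star of F. *)

Section Chains.
Variables (V : finType) (K : fieldType).
Implicit Types (F G H : {set V}) (x y z : {set V} -> K).

Definition pair_sign (u v : V) : K :=
  if (enum_rank u < enum_rank v)%N then -1 else 1.

Lemma enum_rank_nat_inj : injective (fun u : V => nat_of_ord (enum_rank u)).
Proof. by move=> u v /val_inj /enum_rank_inj. Qed.

Lemma bsign_prod v G : bsign K v G = \prod_(u in G) pair_sign u v.
Proof.
rewrite /bsign -prodr_const [RHS](bigID (fun u => (enum_rank u < enum_rank v)%N)) /=.
rewrite [X in _ * X]big1 ?mulr1; last first.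
  by move=> u /andP[_ /negbTE h]; rewrite /pair_sign h.
rewrite [RHS](eq_bigr (fun _ => -1)); last by move=> u /andP[_ h]; rewrite /pair_sign h.
by apply: eq_bigl => u; rewrite !inE.
Qed.

Lemma pair_sign_sq u v : pair_sign u v * pair_sign u v = 1.
Proof. by rewrite /pair_sign; case: ifP; rewrite ?mulrNN mulr1. Qed.

Lemma pair_signC u v : u != v -> pair_sign u v = - pair_sign v u.
Proof.
move=> nuv; rewrite /pair_sign.
have : nat_of_ord (enum_rank u) != enum_rank v.
  by apply: contra nuv => /eqP /enum_rank_nat_inj ->.
by case: ltngtP => //; rewrite ?opprK.
Qed.

Lemma bsign_sq v G : bsign K v G * bsign K v G = 1.
Proof. by rewrite bsign_prod -big_split /= big1 // => u _; rewrite pair_sign_sq. Qed.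

Lemma bsignU1 u w H : w \notin H -> bsign K u (w |: H) = pair_sign w u * bsign K u H.
Proof. by move=> wH; rewrite !bsign_prod big_setU1. Qed.

Lemma bsignU u F H : [disjoint F & H] ->
  bsign K u (F :|: H) = bsign K u F * bsign K u H.
Proof.
by move=> dFH; rewrite !bsign_prod -bigU //; apply: eq_bigl => x; rewrite !inE.
Qed.

(* Sign relating the orientations of F :|: H and of H in the join F * H. *)
Definition face_sign F H : K := \prod_(f in F) bsign K f H.

Lemma face_sign_sq F H : face_sign F H * face_sign F H = 1.
Proof. by rewrite /face_sign -big_split /= big1 // => u _; rewrite bsign_sq. Qed.

Lemma face_signU1 F w H : w \notin F -> w \notin H ->
  face_sign F (w |: H) = (-1) ^+ #|F| * (\prod_(f in F) pair_sign f w) * face_sign F H.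
Proof.
move=> wF wH; rewrite /face_sign (eq_bigr (fun f => pair_sign w f * bsign K f H)); last first.
  by move=> f _; rewrite bsignU1.
rewrite big_split /= -prodrN; congr (_ * _); apply: eq_bigr => f fF.
by rewrite pair_signC //; apply: contraNneq wF => ->.
Qed.

Lemma disjointU1l w H F : [disjoint w |: H & F] = (w \notin F) && [disjoint H & F].
Proof. by rewrite -disjointU1; apply: eq_disjoint => x; rewrite !inE. Qed.

Lemma setUDKl F H : [disjoint H & F] -> (F :|: H) :\: F = H.
Proof. by move=> dHF; rewrite setDUl setDv set0U; apply/setDidPl. Qed.

Lemma setUDK F G : F \subset G -> F :|: (G :\: F) = G.
Proof. by move=> FG; rewrite setDE setUIr setUCr setIT; apply/setUidPr. Qed.

Lemma disjoint_setD F G : [disjoint G :\: F & F].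
Proof. by rewrite -setI_eq0 setDE -setIA [~: F :&: F]setIC setICr setI0. Qed.

Definition lk_chain F x H : K :=
  if [disjoint H & F] then face_sign F H * x (F :|: H) else 0.

Definition join_chain F y G : K :=
  if F \subset G then face_sign F (G :\: F) * y (G :\: F) else 0.

Lemma bd_eq x y H : (forall G, x G = y G) -> bd x H = bd y H.
Proof. by move=> e; apply: eq_bigr => v _; rewrite e. Qed.

Lemma bd_eq0 x H : (forall G, x G = 0) -> bd x H = 0.
Proof. by move=> x0; rewrite /bd big1 // => v _; rewrite x0 mulr0. Qed.

Lemma bdB x y H : bd (fun G => x G - y G) H = bd x H - bd y H.
Proof.
by rewrite /bd -sumrB; apply: eq_bigr => v _; rewrite mulrBr.
Qed.

Lemma bd_scale a x H : bd (fun G => a * x G) H = a * bd x H.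
Proof. by rewrite /bd mulr_sumr; apply: eq_bigr => v _; rewrite mulrCA. Qed.

Lemma bd_sum (I : finType) (P : pred I) (f : I -> {set V} -> K) H :
  bd (fun G => \sum_(i | P i) f i G) H = \sum_(i | P i) bd (f i) H.
Proof.
rewrite /bd exchange_big; apply: eq_bigr => v _; rewrite mulr_sumr.
by apply: eq_bigr.
Qed.

Lemma sum_antisym (f : V -> V -> K) : (forall u, f u u = 0) ->
  (forall u v, f u v = - f v u) -> \sum_u \sum_v f u v = 0.
Proof.
move=> f0 fC; pose lt (u v : V) := (enum_rank u < enum_rank v)%N.
have split_lt u : \sum_v f u v =
    \sum_v (if lt u v then f u v else 0) + \sum_v (if lt v u then f u v else 0).
  rewrite -big_split /=; apply: eq_bigr => v _; rewrite /lt.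
  case: ltngtP => h; rewrite ?addr0 ?add0r //.
  by rewrite (enum_rank_nat_inj h) f0.
rewrite (eq_bigr _ (fun u _ => split_lt u)) big_split /= [X in _ + X]exchange_big /=.
rewrite -big_split big1 // => u _; rewrite -big_split big1 // => v _ /=.
by case: ifP; rewrite ?addr0 // (fC v u) addrN.
Qed.

Lemma bd_bd x G : bd (bd x) G = 0.
Proof.
pose f u v := if (u \notin G) && (v \notin u |: G) then
  bsign K u G * bsign K v (u |: G) * x (v |: (u |: G)) else 0.
have -> : bd (bd x) G = \sum_u \sum_v f u v.
  rewrite /bd big_mkcond; apply: eq_bigr => u _ /=; rewrite /f.
  case: (boolP (u \in G)) => uG /=; first by rewrite big1.
  rewrite mulr_sumr big_mkcond; apply: eq_bigr => v _ /=.
  by case: ifP; rewrite ?mulr0 // mulrA.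
apply: sum_antisym => [u|u v]; first by rewrite /f !inE eqxx /= andbF.
rewrite /f !inE !negb_or.
case: (boolP (u == v)) => [/eqP ->|nuv]; first by rewrite eqxx /= !andbF oppr0.
rewrite eq_sym nuv /=; case: (boolP (u \in G)) => uG; case: (boolP (v \in G)) => vG;
  rewrite /= ?oppr0 //.
(* Adding u then v or v then u differs by the sign pair_sign u v. *)
rewrite setUCA (bsignU1 _ uG) (bsignU1 _ vG) (pair_signC nuv); ring.
Qed.

Lemma bd_lk_chain F x H : bd (lk_chain F x) H = (-1) ^+ #|F| * lk_chain F (bd x) H.
Proof.
rewrite /bd /lk_chain; case: (boolP [disjoint H & F]) => dHF; last first.
  by rewrite mulr0 big1 // => w _; rewrite disjointU1l (negbTE dHF) andbF mulr0.
rewrite !mulr_sumr [LHS]big_mkcond [RHS]big_mkcond; apply: eq_bigr => w _ /=.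
rewrite !inE negb_or; case: (boolP (w \in H)) => wH; rewrite ?andbF //=.
rewrite disjointU1l dHF andbT; case: (boolP (w \in F)) => wF /=; first by rewrite mulr0.
have dFH : [disjoint F & H] by rewrite disjoint_sym.
rewrite setUCA face_signU1 // (bsignU _ dFH) [bsign K w F]bsign_prod; ring.
Qed.

Lemma lk_chain_bd F x H : lk_chain F (bd x) H = (-1) ^+ #|F| * bd (lk_chain F x) H.
Proof. by rewrite bd_lk_chain mulrA -expr2 sqrr_sign mul1r. Qed.

Lemma lk_join_chain F y H : (forall G, y G != 0 -> [disjoint G & F]) ->
  lk_chain F (join_chain F y) H = y H.
Proof.
move=> hy; rewrite /lk_chain /join_chain; case: (boolP [disjoint H & F]) => dHF.
  by rewrite subsetUl setUDKl // mulrA face_sign_sq mul1r.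
by apply/esym/eqP; apply: contraNT dHF => /hy.
Qed.

Lemma lk_chain_setD F x G : F \subset G -> x G = face_sign F (G :\: F) * lk_chain F x (G :\: F).
Proof.
by move=> FG; rewrite /lk_chain disjoint_setD setUDK // mulrA face_sign_sq mul1r.
Qed.

Lemma lk_chain1 v x G :
  lk_chain [set v] x G = if v \notin G then bsign K v G * x (v |: G) else 0.
Proof. by rewrite /lk_chain disjoint_sym disjoints1 /face_sign big_set1. Qed.

Lemma sum_nz (I : finType) (P : pred I) (f : I -> K) :
  \sum_(i | P i) f i != 0 -> exists i, P i && (f i != 0).
Proof.
move=> h; apply/existsP; apply: contraNT h => /existsPn h.
by apply/eqP/big1 => i Pi; move: (h i); rewrite Pi /= negbK => /eqP.
Qed.

Lemma bd_nz x G : bd x G != 0 -> exists2 v, v \notin G & x (v |: G) != 0.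
Proof.
case/sum_nz => v /andP[vG]; case: (eqVneq (x (v |: G)) 0) => [->|]; last by exists v.
by rewrite mulr0 eqxx.
Qed.

Lemma lk_chain_nz F x H : lk_chain F x H != 0 -> [disjoint H & F] /\ x (F :|: H) != 0.
Proof.
rewrite /lk_chain; case: ifP => [dHF|_]; last by rewrite eqxx.
by case: (eqVneq (x (F :|: H)) 0) => [->|]; rewrite ?mulr0 ?eqxx.
Qed.

Lemma join_chain_nz F y G : join_chain F y G != 0 -> F \subset G /\ y (G :\: F) != 0.
Proof.
rewrite /join_chain; case: ifP => [FG|_]; last by rewrite eqxx.
by case: (eqVneq (y (G :\: F)) 0) => [->|]; rewrite ?mulr0 ?eqxx.
Qed.

End Chains.

Section Support.
Variables (V : finType) (K : fieldType).
Implicit Types (F G H : {set V}) (x y z : {set V} -> K) (L : {set {set V}}).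

Lemma supported_bd L n x : is_complex L ->
  supported L n.+1 x -> supported L n (bd x).
Proof.
move=> [_ cL] sx G /bd_nz [v vG] /sx /andP[vGL].
rewrite cardsU1 vG add1n eqSS => ->; rewrite andbT.
by apply: cL vGL _; apply: subsetUr.
Qed.

Lemma bd_supported_out L n x G : is_complex L ->
  supported L n x -> G \notin L -> bd x G = 0.
Proof.
move=> [_ cL] sx GL; apply/eqP; apply: contraNT GL => /bd_nz [v vG] /sx /andP[h _].
by apply: cL h _; apply: subsetUr.
Qed.

Lemma supported_lk_chain L F k x : is_complex L ->
  supported L k x -> supported (link L F) (k - #|F|) (lk_chain F x).
Proof.
move=> [_ cL] sx H /lk_chain_nz [dHF] /sx /andP[FHL /eqP <-].
rewrite inE dHF setUC FHL (cL _ _ FHL (subsetUr _ _)) /=.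
by rewrite cardsU setIC (disjoint_setI0 dHF) cards0 subn0 addKn.
Qed.

Lemma supported_join_chain L F k y :
  supported (link L F) k y -> supported L (k + #|F|) (join_chain F y).
Proof.
move=> sy G /join_chain_nz [FG] /sy /andP[]; rewrite inE => /and3P[_ _].
rewrite setUC setUDK // => -> /eqP <-; rewrite cardsDS // subnK ?eqxx //.
exact: subset_leq_card.
Qed.

Lemma supported_link_disjoint L F k y G :
  supported (link L F) k y -> y G != 0 -> [disjoint G & F].
Proof. by move=> sy /sy /andP[]; rewrite inE => /and3P[]. Qed.

(* Cone off a filling, in the link of F, of the cycle induced there by z. *)
Lemma star_filling L F n z : is_complex L -> Hred_vanish K (link L F) n ->
  supported L (n + #|F|) z -> (forall G, F \subset G -> bd z G = 0) ->
  exists W, [/\ supported L (n + #|F|).+1 W, forall G, W G != 0 -> F \subset G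
              & forall G, F \subset G -> bd W G = z G].
Proof.
move=> cL HF sz zF.
pose y H := (-1) ^+ #|F| * lk_chain F z H.
have sy : supported (link L F) n y.
  move=> H; rewrite /y mulf_eq0 negb_or => /andP[_].
  by have := supported_lk_chain (F := F) cL sz; rewrite addnK; apply.
have cy H : bd y H = 0.
  rewrite /y bd_scale bd_lk_chain /lk_chain; case: ifP => _; last by rewrite !mulr0.
  by rewrite zF ?mulr0 // subsetUl.
have [Y sY bY] := HF y sy cy.
exists (join_chain F Y); split.
- by rewrite -addSn; apply: supported_join_chain.
- by move=> G /join_chain_nz[].
move=> G FG; rewrite (lk_chain_setD (bd _) FG) (lk_chain_setD z FG); congr (_ * _).
rewrite lk_chain_bd (bd_eq (y := Y)); last first.
  by move=> H; apply: lk_join_chain => X; apply: supported_link_disjoint sY.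
by rewrite bY /y mulrA -expr2 sqrr_sign mul1r.
Qed.

Lemma Hred_vanish_delete L A n : is_complex L ->
  (forall G v w, G \in L -> v \in G :&: A -> w \in G :&: A -> v = w) ->
  Hred_vanish K L n -> (forall v, v \in A -> Hred_vanish K (link L [set v]) n) ->
  Hred_vanish K (delete L A) n.
Proof.
move=> cL uA HL HA c sc cyc.
have scL : supported L n c by move=> G /sc; rewrite inE => /andP[/andP[-> _]].
have [b sb bdb] := HL c scL cyc.
have c0 v G : v \in A -> v \in G -> c G = 0.
  move=> vA vG; apply/eqP; apply: contraT => /sc; rewrite inE => /andP[/andP[_]].
  by move=> /disjointFr /(_ vG); rewrite vA.
have /ClassicalEpsilon.choice[W WP] : forall v, exists Wv, v \in A ->
    [/\ supported L n.+2 Wv, forall G, Wv G != 0 -> v \in G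
      & forall G, v \in G -> bd Wv G = b G].
  move=> v; case: (boolP (v \in A)) => vA; last by exists (fun _ => 0).
  have [||Wv [sW WF bW]] := @star_filling L [set v] n b cL (HA v vA).
  - by rewrite cards1 addn1.
  - by move=> G; rewrite sub1set => vG; rewrite bdb (c0 v).
  exists Wv => _; rewrite cards1 addn1 in sW; split=> // G.
    by move/WF; rewrite sub1set.
  by rewrite -sub1set; apply: bW.
pose b' G := b G - \sum_(v in A) bd (W v) G.
have b'0 w G : w \in A -> w \in G -> b' G = 0.
  move=> wA wG; have [_ _ bWw] := WP w wA.
  rewrite /b' (bigD1 w) //= bWw // opprD addrA subrr sub0r.
  rewrite big1 ?oppr0 // => v /andP[vA nvw]; have [sWv Wv _] := WP v vA.
  apply/eqP; apply: contraT => /bd_nz [u uG] Wvu; have /andP[uGL _] := sWv _ Wvu.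
  case/eqP: nvw; apply: (uA _ _ _ uGL); rewrite inE ?vA ?wA ?(Wv _ Wvu) //.
  by rewrite !inE wG orbT.
exists b'; last first.
  by move=> G; rewrite bdB bd_sum big1 ?subr0 // => v _; apply: bd_bd.
move=> G b'G; have /andP[GL ->] : (G \in L) && (#|G| == n.+1).
  move: b'G; rewrite /b'; case: (eqVneq (b G) 0) => [->|bG _]; last exact: sb.
  rewrite sub0r oppr_eq0 => /sum_nz [v /andP[vA]].
  by have [sWv _ _] := WP v vA; apply: supported_bd cL sWv G.
rewrite inE GL andbT /=; apply/pred0P => w /=; apply/negP => /andP[wG wA].
by move/eqP: b'G; apply; apply: b'0 wA wG.
Qed.

End Support.

Lemma Hred_vanish_set0 (V : finType) (K : fieldType) n :
  Hred_vanish K (set0 : {set {set V}}) n.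
Proof.
move=> c sc _; exists (fun _ => 0) => [G|G]; first by rewrite eqxx.
rewrite bd_eq0 //; apply/esym/eqP; apply: contraT => /sc; by rewrite inE.
Qed.

(* In top degree there are no boundaries, so the surjectivity in the
   Buchsbaum* condition completes a relative cycle near F to an absolute one. *)
Lemma BuchsbaumStar_top_cycle (V : finType) (K : fieldType) (D : {set {set V}}) d
    (F : {set V}) (W : {set V} -> K) :
  is_complex D -> BuchsbaumStar K D d -> F != set0 ->
  supported D d W -> (forall G : {set V}, F \subset G -> bd W G = 0) ->
  exists C, [/\ supported D d C, forall G, bd C G = 0
              & forall G : {set V}, F \subset G -> C G = W G].
Proof.
move=> cD [[[Dle _] _] HD] F0 sW cW; have [_ cDs] := cD.
case: (boolP (F \in D)) => FD; last first.
  exists (fun _ => 0); split=> [G|G|G FG]; [by rewrite eqxx | exact: bd_eq0 |].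
  apply/esym/eqP; apply: contraT => /sW /andP[GD _].
  by case/negP: FD; apply: cDs GD FG.
have rel G : G \notin costar D F -> bd W G = 0.
  rewrite inE negb_and negbK => /orP[GD|FG]; [exact: bd_supported_out cD sW GD | exact: cW].
have [C [sC cC [b sb hb]]] := HD F FD F0 W sW rel.
exists C; split=> // G FG.
have b0 X : b X = 0.
  by apply/eqP; apply: contraT => /sb /andP[/Dle XD /eqP cX]; rewrite cX ltnn in XD.
by rewrite hb ?inE ?FG ?andbF // (bd_eq0 _ b0) addr0.
Qed.

Section Complexes.
Variable V : finType.
Implicit Types (F G : {set V}) (D L : {set {set V}}).

Lemma link_complex D F : is_complex D -> F \in D -> is_complex (link D F).
Proof.
move=> [D0 cD] FD; split; first by rewrite inE D0 set0U FD -setI_eq0 set0I eqxx.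
move=> A B; rewrite !inE => /and3P[AD dAF AFD] BA.
rewrite (cD _ _ AD BA) (disjointWl BA dAF) /=.
by apply: cD AFD _; apply: setSU.
Qed.

Lemma delete_complex D A : is_complex D -> is_complex (delete D A).
Proof.
move=> [D0 cD]; split; first by rewrite inE D0 -setI_eq0 set0I eqxx.
move=> F G; rewrite !inE => /andP[FD dFA] GF; rewrite (cD _ _ FD GF) /=.
exact: disjointWl GF dFA.
Qed.

Lemma link_notin D F : is_complex D -> F \notin D -> link D F = set0.
Proof.
move=> [_ cD] FD; apply/setP => G; rewrite !inE; apply/negP => /and3P[_ _ GFD].
by case/negP: FD; apply: cD GFD _; apply: subsetUr.
Qed.

Lemma link_link D F v : is_complex D -> v \notin F ->
  link (link D F) [set v] = link D (v |: F).
Proof.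
move=> [D0 cD] vF; apply/setP => s.
rewrite !inE ![[disjoint s & _]]disjoint_sym disjoints1 disjointU1l disjoint_sym.
apply/idP/idP.
  case/and3P=> /and3P[sD dsF sFD] vs /and3P[_ _ h].
  by rewrite sD vs dsF /= setUA.
case/and3P=> sD /andP[vs dsF] h; rewrite sD dsF vs /=.
have svD : s :|: [set v] \in D by apply: cD h _; rewrite setUA subsetUl.
rewrite svD -setUA h (setUC s [set v]) disjointU1l dsF vF !andbT.
by apply: cD h _; rewrite setUCA subsetUr.
Qed.

Variables (d : nat) (kappa : V -> 'I_d).

Lemma rank_select_complex D S : is_complex D -> is_complex (rank_select kappa D S).
Proof.
move=> [D0 cD]; split; first by rewrite inE D0 imset0 sub0set.
move=> F G; rewrite !inE => /andP[FD FS] GF; rewrite (cD _ _ FD GF) /=.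
exact: subset_trans (imsetS _ GF) FS.
Qed.

Lemma delete_rank_select D S A :
  delete (rank_select kappa D S) A = rank_select kappa (delete D A) S.
Proof. by apply/setP => G; rewrite !inE andbAC. Qed.

Lemma rank_select_rank_select D (S T : {set 'I_d}) : S \subset T ->
  rank_select kappa (rank_select kappa D T) S = rank_select kappa D S.
Proof.
move=> ST; apply/setP => G; rewrite !inE -andbA; case: (G \in D) => //=.
by case: (boolP (_ \subset S)) => h; rewrite ?andbF // andbT (subset_trans h ST).
Qed.

Lemma rank_selectT D : rank_select kappa D setT = D.
Proof. by apply/setP => G; rewrite !inE subsetT andbT. Qed.

Definition rainbow D := forall G, G \in D -> {in G &, injective kappa}.

Definition colored_within D (T : {set 'I_d}) := forall G, G \in D -> kappa @: G \subset T.

Lemma balanced_rainbow D : is_complex D -> balanced kappa D -> rainbow D.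
Proof.
move=> [_ cD] bal G GD u v uG vG e; apply/eqP; apply: contraT => nuv.
have : [set u; v] \in D by apply: cD GD _; rewrite subUset !sub1set uG vG.
by move/bal => /(_ nuv); rewrite e eqxx.
Qed.

Lemma rainbowS D D' : D' \subset D -> rainbow D -> rainbow D'.
Proof. by move=> /subsetP sD rD G /sD; apply: rD. Qed.

Lemma card_colors D G : rainbow D -> G \in D -> #|kappa @: G| = #|G|.
Proof. by move=> rD GD; rewrite card_in_imset //; apply: rD. Qed.

Lemma colors_full D T G : rainbow D -> colored_within D T -> G \in D ->
  #|G| = #|T| -> kappa @: G = T.
Proof. by move=> rD cT GD cG; apply/eqP; rewrite eqEcard cT //= (card_colors rD GD) cG. Qed.

Lemma rank_select_card D S F : rainbow D -> F \in rank_select kappa D S -> (#|F| <= #|S|)%N.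
Proof.
move=> rD; rewrite inE => /andP[FD FS]; rewrite -(card_colors rD FD).
exact: subset_leq_card.
Qed.

Lemma rank_select_ind (P : {set {set V}} -> nat -> Prop) D :
  is_complex D -> rainbow D -> P D d ->
  (forall D' (S : {set 'I_d}) (i : 'I_d), is_complex D' -> rainbow D' ->
     colored_within D' (i |: S) -> i \notin S ->
     P D' #|i |: S| -> P (rank_select kappa D' S) #|S|) ->
  forall S, P (rank_select kappa D S) #|S|.
Proof.
move=> cD rD PD step S; have [n] := ubnP #|~: S|; elim: n S => // n IH S.
case: (pickP (mem (~: S))) => [i iS|S_full] ltSn; last first.
  have -> : S = setT by apply/setP => x; move: (S_full x); rewrite /= !inE => /negbFE.
  by rewrite rank_selectT cardsT card_ord.
rewrite !inE in iS.
have ltiSn : (#|~: (i |: S)| < n)%N.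
  by move: ltSn; rewrite setCU setIC -setDE (cardsD1 i (~: S)) inE iS add1n ltnS.
have := step _ S i (rank_select_complex (i |: S) cD) _ _ iS (IH _ ltiSn).
rewrite rank_select_rank_select ?subsetUr //; apply.
  by apply: rainbowS rD; apply/subsetP => G; rewrite inE => /andP[].
by move=> G; rewrite inE => /andP[].
Qed.

End Complexes.

Section DeleteColor.
Variables (V : finType) (K : fieldType) (d : nat) (kappa : V -> 'I_d).
Variables (D : {set {set V}}) (S : {set 'I_d}) (i : 'I_d).
Hypotheses (cD : is_complex D) (rD : rainbow kappa D)
  (colD : colored_within kappa D (i |: S)) (iS : i \notin S).
Implicit Types (F G : {set V}) (x z W : {set V} -> K).

Let card_iS : #|i |: S| = #|S|.+1.
Proof. by rewrite cardsU1 iS. Qed.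

Lemma rank_select_pure : pure_dim D #|i |: S| -> pure_dim (rank_select kappa D S) #|S|.
Proof.
have [_ cDs] := cD; move=> [_ pD]; split=> [F|F]; first exact: rank_select_card.
rewrite inE => /andP[FD FS]; have [G GD /andP[FG /eqP cG]] := pD F FD.
pose G' := [set x in G | kappa x \in S].
have G'D : G' \in D by apply: cDs GD _; apply/subsetP => x; rewrite inE => /andP[].
have G'S : kappa @: G' \subset S.
  by apply/subsetP => c /imsetP [x]; rewrite inE => /andP[_ xS] ->.
exists G'; first by rewrite inE G'D G'S.
apply/andP; split.
  apply/subsetP => x xF; rewrite inE (subsetP FG _ xF) /=.
  by apply: (subsetP FS); apply: imset_f.
rewrite -(card_colors rD G'D); suff -> : kappa @: G' = S by [].
apply/eqP; rewrite eqEsubset G'S /=; apply/subsetP => c cS.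
have : c \in kappa @: G by rewrite (colors_full rD colD GD cG) !inE cS orbT.
by case/imsetP => x xG e; rewrite e; apply: imset_f; rewrite inE xG -e.
Qed.

Lemma link_rank_select F : F \in rank_select kappa D S ->
  link (rank_select kappa D S) F = delete (link D F) [set v | kappa v == i].
Proof.
rewrite inE => /andP[_ FS]; apply/setP => G; rewrite !inE; apply/idP/idP.
  case/and3P => /andP[GD GS] dGF /andP[GFD _]; rewrite GD dGF GFD /=.
  apply/pred0P => v /=; rewrite inE; apply/negP => /andP[vG /eqP cv].
  by case/negP: iS; rewrite -cv; apply: (subsetP GS); apply: imset_f.
case/andP => /and3P[GD dGF GFD] /pred0P dGi; rewrite GD dGF GFD /=.
have GS : kappa @: G \subset S.
  apply/subsetP => c /imsetP [x xG ->].
  have := subsetP (colD GD) (kappa x) (imset_f _ xG); rewrite !inE => /orP[/eqP cx|//].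
  by move: (dGi x); rewrite /= inE xG cx eqxx.
by rewrite GS imsetU subUset GS FS.
Qed.

Lemma Buchsbaum_rank_select :
  Buchsbaum K D #|i |: S| -> Buchsbaum K (rank_select kappa D S) #|S|.
Proof.
move=> [pD BD]; split; first exact: rank_select_pure.
move=> F FDS F0 n ltnF; have FD : F \in D by move: FDS; rewrite inE => /andP[].
rewrite link_rank_select //; apply: Hred_vanish_delete.
- exact: link_complex.
- move=> G v w; rewrite inE => /and3P[GD _ _]; rewrite !inE.
  by case/andP=> vG /eqP cv /andP[wG /eqP cw]; apply: (rD GD) => //; rewrite cv cw.
- by apply: BD => //; rewrite card_iS ltnS ltnW.
move=> v; rewrite inE => /eqP cv.
have [vL|vL] := boolP ([set v] \in link D F); last first.
  by rewrite link_notin //; [apply: Hred_vanish_set0 | apply: link_complex cD FD].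
have vF : v \notin F by move: vL; rewrite inE disjoints1 => /and3P[].
rewrite link_link //; apply: BD.
- by move: vL; rewrite inE setUC => /and3P[].
- by apply/set0Pn; exists v; rewrite !inE eqxx.
by rewrite cardsU1 vF card_iS add1n addnS ltnS.
Qed.

Definition color_link_sum (C : V -> {set V} -> K) G : K :=
  \sum_(v | kappa v == i) lk_chain [set v] (C v) G.

Lemma supported_color_link_sum C :
  (forall v, kappa v = i -> supported D #|S|.+1 (C v)) ->
  supported (rank_select kappa D S) #|S| (color_link_sum C).
Proof.
have [_ cDs] := cD; move=> sC G /sum_nz [v /andP[/eqP cv]].
rewrite lk_chain1; case: ifPn => [vG|_]; last by rewrite eqxx.
rewrite mulf_eq0 negb_or => /andP[_ /(sC v cv) /andP[vGD]].
rewrite cardsU1 vG add1n eqSS => ->; rewrite andbT inE.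
have GD : G \in D by apply: cDs vGD _; apply: subsetUr.
rewrite GD /=; apply/subsetP => c /imsetP [x xG ->].
have := subsetP (colD GD) _ (imset_f kappa xG); rewrite !inE => /orP[/eqP cx|//].
have xv : x = v by apply: (rD vGD); rewrite ?cx ?cv // !inE ?eqxx ?xG ?orbT.
by move: vG; rewrite -xv xG.
Qed.

Lemma bd_color_link_sum C G :
  (forall v, kappa v = i -> forall G, bd (C v) G = 0) -> bd (color_link_sum C) G = 0.
Proof.
move=> cC; rewrite /color_link_sum bd_sum big1 // => v /eqP cv.
by rewrite bd_lk_chain /lk_chain; case: ifP => _; rewrite ?(cC v cv) !mulr0.
Qed.

(* A top coface of a face of D_S adds exactly one vertex, of colour i. *)
Lemma bd_rank_select_face W G : supported D #|S|.+1 W ->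
  G \in rank_select kappa D S -> bd W G = color_link_sum (fun _ => W) G.
Proof.
move=> sW; rewrite inE => /andP[_ GS].
rewrite /bd (bigID (fun u => kappa u == i)) /= [X in _ + X]big1 ?addr0; last first.
  move=> u /andP[uG cu]; apply/eqP; rewrite mulf_eq0; apply/orP; right.
  apply: contraT => /sW /andP[uGD /eqP cuG].
  have : i \in kappa @: (u |: G).
    by rewrite (colors_full rD colD uGD (etrans cuG (esym card_iS))) setU11.
  case/imsetP => x.
  rewrite !inE => /orP[/eqP -> | xG] ix; first by rewrite ix eqxx in cu.
  by case/negP: iS; rewrite ix; apply: (subsetP GS); apply: imset_f.
rewrite /color_link_sum (eq_bigr _ (fun v _ => lk_chain1 v W G)) -big_mkcondr.
by apply: eq_bigl => v; rewrite andbC.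
Qed.

Lemma BuchsbaumStar_color_cycles F W : BuchsbaumStar K D #|i |: S| ->
  supported D #|S|.+1 W -> (forall v G, kappa v = i -> v |: F \subset G -> bd W G = 0) ->
  exists C : V -> {set V} -> K, forall v, kappa v = i ->
    [/\ supported D #|S|.+1 (C v), forall G, bd (C v) G = 0
      & forall G, v |: F \subset G -> C v G = W G].
Proof.
move=> BsD sW cW.
have /ClassicalEpsilon.choice[C CP] : forall v, exists Cv, kappa v = i ->
    [/\ supported D #|S|.+1 Cv, forall G, bd Cv G = 0
      & forall G, v |: F \subset G -> Cv G = W G]; last by exists C.
move=> v; case: (eqVneq (kappa v) i) => cv; last first.
  by exists (fun _ => 0) => /eqP; rewrite (negbTE cv).
have [|||Cv] := @BuchsbaumStar_top_cycle _ _ D _ (v |: F) W cD BsD.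
- by apply/set0Pn; exists v; rewrite !inE eqxx.
- by rewrite card_iS.
- by move=> G; apply: cW.
by rewrite card_iS => CvP; exists Cv.
Qed.

Lemma BuchsbaumStar_rank_select :
  BuchsbaumStar K D #|i |: S| -> BuchsbaumStar K (rank_select kappa D S) #|S|.
Proof.
move=> BsD; have [BD _] := BsD; split; first exact: Buchsbaum_rank_select.
move=> F FDS F0 z sz rz.
have FD : F \in D by move: FDS; rewrite inE => /andP[].
have szD : supported D #|S| z by move=> G /sz /andP[]; rewrite inE => /andP[-> _] ->.
have zF G : F \subset G -> bd z G = 0 by move=> FG; apply: rz; rewrite inE FG andbF.
have leFS := rank_select_card rD FDS.
have [|||W [sW _ bW]] := @star_filling _ _ D F (#|S| - #|F|) z cD.
- by apply: BD.2 => //; rewrite subnK // card_iS.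
- by rewrite subnK.
- exact: zF.
rewrite subnK // in sW.
have [|C CP] := BuchsbaumStar_color_cycles (F := F) BsD sW.
  move=> v G cv; rewrite subUset sub1set => /andP[vG FG]; rewrite bW //.
  apply/eqP; apply: contraT => /sz /andP[]; rewrite inE => /andP[_ GS] _.
  by case/negP: iS; rewrite -cv; apply: (subsetP GS); apply: imset_f.
have sc : supported (rank_select kappa D S) #|S| (color_link_sum C).
  by apply: supported_color_link_sum => v /CP[].
exists (color_link_sum C); split=> //.
  by move=> G; apply: bd_color_link_sum => v /CP[].
exists (fun _ => 0) => [G|G]; first by rewrite eqxx.
rewrite (bd_eq0 _ (fun _ => erefl)) addr0 inE negb_and negbK.
case: (boolP (G \in rank_select kappa D S)) => //= GDS FG.
  rewrite -bW // bd_rank_select_face //; apply: eq_bigr => v /eqP cv.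
  rewrite !lk_chain1; case: ifP => // _; have [_ _ ->] // := CP v cv.
  exact: setUS.
have -> : z G = 0 by apply/eqP; apply: contraT => /sz /andP[]; rewrite (negbTE GDS).
by apply/esym/eqP; apply: contraT => /sc; rewrite (negbTE GDS).
Qed.

End DeleteColor.

Theorem mainTheorem3 (K : fieldType) (V : finType) (m d : nat)
  (D : {set {set V}}) (kappa : V -> 'I_d) :
  (0 < m)%N ->
  is_complex D ->
  balanced kappa D ->
  mBuchsbaumStar K m D d ->
  forall S : {set 'I_d}, S != set0 -> S != setT ->
    mBuchsbaumStar K m (rank_select kappa D S) #|S|.
Proof.
move=> _ cD bal [BD BsD] S _ _; have rD := balanced_rainbow cD bal.
split.
  apply: (rank_select_ind (P := Buchsbaum K)) => // D1 S1 i cD1 rD1 colD1 iS1.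
  exact: Buchsbaum_rank_select.
move=> A AV Am; rewrite delete_rank_select.
have AV' : A \subset verts D.
  by apply: subset_trans AV _; apply/subsetP => v; rewrite !inE => /andP[].
apply: (rank_select_ind (P := BuchsbaumStar K)).
- exact: delete_complex.
- by apply: rainbowS rD; apply/subsetP => G; rewrite inE => /andP[].
- exact: BsD AV' Am.
move=> D1 S1 i cD1 rD1 colD1 iS1; exact: BuchsbaumStar_rank_select.
Qed.
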